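(* Let $\rho>0$ be irrational and $p>0$. Suppose that complex numbers $a_{k,\ell,m}$, indexed by integers $k\ge1$, $\ell\ge m\ge0$ with $k\rho+\ell+1<p$, satisfy $$\sum_{\substack{k\ge1,\ \ell\ge m\ge0\\ k\rho+\ell+1<p}}a_{k,\ell,m}\frac{(\log n)^m}{n^{k\rho+\ell+1}}=\mathcal O(n^{-p})\quad(n\to\infty).$$ Then $a_{k,\ell,m}=0$ for all such triples $(k,\ell,m)$. *)

From Stdlib Require Import Reals QArith.
From Coquelicot Require Import Coquelicot.
Open Scope R_scope.

Definition irrational (x : R) : Prop := forall q : Q, x <> Q2R q.

Definition admissible (rho p : R) (k l m : nat) : Prop :=
  (1 <= k)%nat /\ (m <= l)%nat /\ INR k * rho + INR l + 1 < p.

(* A bound B such that every admissible triple has k, l <= B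
   (when rho > 0): k < p/rho and l < p. *)
Definition bound (rho p : R) : nat :=
  (Z.to_nat (up (p / rho)) + Z.to_nat (up p))%nat.

Definition term (rho : R) (a : nat -> nat -> nat -> C) (k l m n : nat) : C :=
  a k l m * RtoC ((ln (INR n)) ^ m / Rpower (INR n) (INR k * rho + INR l + 1)).

Definition adm_sum (rho p : R) (a : nat -> nat -> nat -> C) (n : nat) : C :=
  sum_n (fun k =>
    sum_n (fun l =>
      sum_n (fun m =>
        if (Nat.leb 1 k && Nat.leb m l)%bool then
          if Rlt_dec (INR k * rho + INR l + 1) p then term rho a k l m n
          else RtoC 0
        else RtoC 0) l) (bound rho p)) (bound rho p).

From Pilot Require Import Defs.
From Stdlib Require Import Reals QArith Qreals Lra Lia List.
From Coquelicot Require Import Coquelicot.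
Open Scope R_scope.

(* The scales (ln n)^m / n^e are totally ordered by asymptotic dominance: smaller e
   first, and for equal e larger m.  Dividing an O(n^-p) combination of such scales by
   its dominant scale (with e < p), every other term and the error term tend to 0, so
   the total coefficient of the dominant scale vanishes; drop that scale and repeat.
   For the triples (k, l, m) the scale is (ln n)^m / n^(k rho + l + 1), and since rho is
   irrational, k rho + l determines (k, l): every scale carries the single coefficient
   a_{k,l,m}. *)

Lemma Rpower_pos (x y : R) : 0 < Rpower x y.
Proof. apply exp_pos. Qed.

Lemma eventually_INR_gt (X : R) : eventually (fun n : nat => X < INR n).
Proof.
  pose proof is_lim_seq_INR as H. apply is_lim_seq_spec in H. exact (H X).
Qed.

Lemma is_lim_seq_ln_INR : is_lim_seq (fun n => ln (INR n)) p_infty.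
Proof. exact (filterlim_comp _ _ _ INR ln _ _ _ is_lim_seq_INR is_lim_ln_p). Qed.

Lemma eventually_ln_INR_gt_1 : eventually (fun n : nat => 1 < ln (INR n)).
Proof.
  pose proof is_lim_seq_ln_INR as H. apply is_lim_seq_spec in H. exact (H 1).
Qed.

Lemma is_lim_seq_inv_ln_INR : is_lim_seq (fun n => / ln (INR n)) 0.
Proof. exact (is_lim_seq_inv _ _ is_lim_seq_ln_INR ltac:(discriminate)). Qed.

Lemma is_lim_seq_Rpower_neg (s : R) : 0 < s ->
  is_lim_seq (fun n => Rpower (INR n) (- s)) 0.
Proof.
  intros Hs.
  assert (H : is_lim_seq (fun n => - s * ln (INR n)) m_infty).
  { apply (is_lim_seq_mult _ _ (- s) p_infty);
      [apply is_lim_seq_const | apply is_lim_seq_ln_INR |].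
    apply is_Rbar_mult_sym, is_Rbar_mult_p_infty_neg. simpl; lra. }
  exact (filterlim_comp _ _ _ _ exp _ _ _ H is_lim_exp_m).
Qed.

Lemma ln_le_Rpower (x c : R) : 0 < c -> c * ln x <= Rpower x c.
Proof. intros Hc. pose proof (exp_ineq1_le (c * ln x)). unfold Rpower. lra. Qed.

Definition scale (e : R) (m : nat) (n : nat) : R := ln (INR n) ^ m / Rpower (INR n) e.

Lemma is_lim_seq_scale (d : R) (j : nat) : 0 < d -> is_lim_seq (scale d j) 0.
Proof.
  intros Hd.
  set (c := d / (2 * (INR j + 1))).
  assert (Hc : 0 < c) by (unfold c; pose proof (pos_INR j); apply Rdiv_lt_0_compat; lra).
  assert (Hjc : INR j * c - d <= - (d / 2)).
  { unfold c. pose proof (pos_INR j).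
    apply Rmult_le_reg_r with (2 * (INR j + 1)); [lra|]. field_simplify; [nra|lra]. }
  apply is_lim_seq_le_le_loc with (u := fun _ => 0)
    (w := fun n => / c ^ j * Rpower (INR n) (- (d / 2))).
  - generalize (eventually_INR_gt 1). apply filter_imp. intros n Hn.
    set (x := INR n) in *.
    assert (Hl : 0 <= ln x) by (rewrite <- ln_1; apply ln_le; lra).
    assert (Hlc : ln x <= Rpower x c / c).
    { apply Rmult_le_reg_l with c; [lra|]. field_simplify; [apply ln_le_Rpower|]; lra. }
    unfold scale. fold x. split.
    + apply Rdiv_le_0_compat; [apply pow_le | apply Rpower_pos]; lra.
    + apply Rle_trans with ((Rpower x c / c) ^ j / Rpower x d).
      { apply Rmult_le_compat_r; [left; apply Rinv_0_lt_compat, Rpower_pos|].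
        apply pow_incr; lra. }
      replace ((Rpower x c / c) ^ j / Rpower x d)
        with (/ c ^ j * Rpower x (INR j * c - d)).
      * apply Rmult_le_compat_l; [left; apply Rinv_0_lt_compat, pow_lt; lra|].
        apply Rle_Rpower; lra.
      * assert (Hpow : Rpower x (INR j * c) = Rpower x c ^ j).
        { rewrite Rmult_comm, <- Rpower_mult. apply Rpower_pow, Rpower_pos. }
        unfold Rminus. rewrite Rpower_plus, Rpower_Ropp, Hpow.
        unfold Rdiv. rewrite Rpow_mult_distr, pow_inv. ring.
  - apply is_lim_seq_const.
  - replace (Finite 0) with (Rbar_mult (/ c ^ j) 0) by (simpl; f_equal; ring).
    apply is_lim_seq_scal_l, is_lim_seq_Rpower_neg. lra.
Qed.

Lemma is_lim_seq_scale_ratio (e E : R) (m M : nat) :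
  E < e \/ (E = e /\ (m < M)%nat) ->
  is_lim_seq (fun n => scale e m n / scale E M n) 0.
Proof.
  intros Hdom.
  destruct Hdom as [Hlt | [-> Hlt]].
  - apply is_lim_seq_le_le_loc with (u := fun _ => 0) (w := scale (e - E) m);
      [| apply is_lim_seq_const | apply is_lim_seq_scale; lra].
    generalize eventually_ln_INR_gt_1. apply filter_imp. intros n HL.
    unfold scale. set (L := ln (INR n)) in *.
    assert (HLM : 1 <= L ^ M) by (apply pow_R1_Rle; lra).
    assert (HLm : 0 <= L ^ m) by (apply pow_le; lra).
    pose proof (Rpower_pos (INR n) E). pose proof (Rpower_pos (INR n) (e - E)).
    replace (L ^ m / Rpower (INR n) e / (L ^ M / Rpower (INR n) E))
      with (L ^ m / Rpower (INR n) (e - E) / L ^ M).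
    2: { replace (Rpower (INR n) e) with (Rpower (INR n) (e - E) * Rpower (INR n) E)
           by (rewrite <- Rpower_plus; f_equal; ring).
         field; lra. }
    assert (0 <= L ^ m / Rpower (INR n) (e - E)) by (apply Rdiv_le_0_compat; lra).
    split.
    + apply Rdiv_le_0_compat; lra.
    + apply Rmult_le_reg_r with (L ^ M); [lra|]. field_simplify; nra.
  - apply is_lim_seq_le_le_loc with (u := fun _ => 0) (w := fun n => / ln (INR n));
      [| apply is_lim_seq_const | apply is_lim_seq_inv_ln_INR].
    generalize eventually_ln_INR_gt_1. apply filter_imp. intros n HL.
    unfold scale. set (L := ln (INR n)) in *.
    pose proof (Rpower_pos (INR n) e).
    assert (HLM : L ^ M = L ^ m * L ^ (M - m)) by (rewrite <- pow_add; f_equal; lia).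
    assert (HLk : L <= L ^ (M - m)) by (rewrite <- (pow_1 L) at 1; apply Rle_pow; [lra | lia]).
    assert (0 < L ^ m) by (apply pow_lt; lra).
    replace (L ^ m / Rpower (INR n) e / (L ^ M / Rpower (INR n) e)) with (/ L ^ (M - m))
      by (rewrite HLM; field; repeat split; try apply pow_nonzero; lra).
    split.
    + left. apply Rinv_0_lt_compat. lra.
    + apply Rinv_le_contravar; lra.
Qed.

Definition bigO_Rpower_neg (p : R) (u : nat -> C) : Prop :=
  exists (M : R) (N : nat), forall n : nat, (N <= n)%nat ->
    Cmod (u n) <= M * Rpower (INR n) (- p).

Lemma bigO_Rpower_neg_ext (p : R) (u v : nat -> C) :
  (forall n, u n = v n) -> bigO_Rpower_neg p u -> bigO_Rpower_neg p v.
Proof.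
  intros Huv [M [N HO]]. exists M, N. intros n Hn. rewrite <- Huv. auto.
Qed.

Section ListSums.
Context {I : Type}.

Definition lsum (f : I -> C) (l : list I) : C :=
  fold_right (fun i acc => Cplus (f i) acc) (RtoC 0) l.

Lemma lsum_ext (f g : I -> C) (l : list I) :
  (forall i, In i l -> f i = g i) -> lsum f l = lsum g l.
Proof.
  induction l as [|x t IH]; intros Hfg; simpl; [reflexivity|].
  rewrite Hfg by (simpl; auto).
  rewrite IH by (intros i Hi; apply Hfg; simpl; auto). reflexivity.
Qed.

Lemma lsum_zero (l : list I) : lsum (fun _ => RtoC 0) l = RtoC 0.
Proof. induction l as [|x t IH]; simpl; [|rewrite IH, Cplus_0_l]; reflexivity. Qed.

Lemma lsum_split (q : I -> bool) (f : I -> C) (l : list I) :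
  lsum f l = Cplus (lsum (fun i => if q i then f i else RtoC 0) l)
                   (lsum (fun i => if q i then RtoC 0 else f i) l).
Proof.
  induction l as [|x t IH]; simpl; [symmetry; apply Cplus_0_l|].
  rewrite IH. destruct (q x); ring.
Qed.

Lemma lsum_filter (q : I -> bool) (f : I -> C) (l : list I) :
  lsum f (filter q l) = lsum (fun i => if q i then f i else RtoC 0) l.
Proof.
  induction l as [|x t IH]; simpl; [reflexivity|].
  destruct (q x); simpl; rewrite IH; [reflexivity | symmetry; apply Cplus_0_l].
Qed.

Lemma lsum_mult_r (f : I -> C) (x : C) (l : list I) :
  Cmult (lsum f l) x = lsum (fun i => Cmult (f i) x) l.
Proof. induction l as [|y t IH]; simpl; [apply Cmult_0_l|]. rewrite <- IH. ring. Qed.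

Lemma is_lim_seq_Cmod_lsum (u : I -> nat -> C) (l : list I) :
  (forall i, In i l -> is_lim_seq (fun n => Cmod (u i n)) 0) ->
  is_lim_seq (fun n => Cmod (lsum (fun i => u i n) l)) 0.
Proof.
  induction l as [|x t IH]; intros Hu; simpl.
  - apply is_lim_seq_ext with (fun _ => 0); [intros; symmetry; apply Cmod_0|].
    apply is_lim_seq_const.
  - apply is_lim_seq_le_le with (u := fun _ => 0)
      (w := fun n => Cmod (u x n) + Cmod (lsum (fun i => u i n) t)).
    + intros n. split; [apply Cmod_ge_0 | apply Cmod_triangle].
    + apply is_lim_seq_const.
    + rewrite <- (Rplus_0_r 0). apply is_lim_seq_plus'; [apply Hu; simpl; auto|].
      apply IH. intros i Hi. apply Hu. simpl; auto.
Qed.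

Lemma lsum_app (f : I -> C) (l1 l2 : list I) :
  lsum f (l1 ++ l2) = Cplus (lsum f l1) (lsum f l2).
Proof. induction l1 as [|x t IH]; simpl; [symmetry; apply Cplus_0_l | rewrite IH; ring]. Qed.

End ListSums.

Lemma lsum_flat_map {A I : Type} (f : I -> C) (g : A -> list I) (s : list A) :
  lsum f (flat_map g s) = lsum (fun x => lsum f (g x)) s.
Proof. induction s as [|x t IH]; simpl; [|rewrite lsum_app, IH]; reflexivity. Qed.

Lemma lsum_map {A I : Type} (f : I -> C) (g : A -> I) (s : list A) :
  lsum f (map g s) = lsum (fun x => f (g x)) s.
Proof. induction s as [|x t IH]; simpl; [|rewrite IH]; reflexivity. Qed.

Section Scales.
Context {I : Type} (e : I -> R) (m : I -> nat).

Definition same_scale (i j : I) : bool :=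
  if Req_EM_T (e i) (e j) then Nat.eqb (m i) (m j) else false.

Lemma same_scaleP (i j : I) : same_scale i j = true <-> e i = e j /\ m i = m j.
Proof.
  unfold same_scale. destruct (Req_EM_T (e i) (e j)) as [He | He].
  - rewrite Nat.eqb_eq. tauto.
  - split; [discriminate | tauto].
Qed.

Definition scaled_sum (c : I -> C) (l : list I) (n : nat) : C :=
  lsum (fun i => Cmult (c i) (RtoC (scale (e i) (m i) n))) l.

Definition group_sum (c : I -> C) (l : list I) (j : I) : C :=
  lsum (fun i => if same_scale j i then c i else RtoC 0) l.

Definition drop_scale (j : I) (l : list I) : list I :=
  filter (fun i => negb (same_scale j i)) l.

Lemma length_drop_scale (j : I) (l : list I) :
  In j l -> (length (drop_scale j l) < length l)%nat.
Proof.
  intros Hj. rewrite <- (filter_length (same_scale j) l).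
  assert (Hin : In j (filter (same_scale j) l)).
  { apply filter_In. split; [exact Hj|]. apply same_scaleP. auto. }
  destruct (filter (same_scale j) l); [destruct Hin | simpl; unfold drop_scale; lia].
Qed.

Lemma scaled_sum_drop_scale (c : I -> C) (l : list I) (j : I) (n : nat) :
  scaled_sum c l n =
  Cplus (Cmult (group_sum c l j) (RtoC (scale (e j) (m j) n)))
        (scaled_sum c (drop_scale j l) n).
Proof.
  unfold scaled_sum, group_sum, drop_scale.
  rewrite (lsum_split (same_scale j)), lsum_filter, lsum_mult_r. f_equal.
  - apply lsum_ext. intros i _.
    destruct (same_scale j i) eqn:Hji; [|symmetry; apply Cmult_0_l].
    apply same_scaleP in Hji as [-> ->]. reflexivity.
  - apply lsum_ext. intros i _. destruct (same_scale j i); reflexivity.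
Qed.

Lemma group_sum_drop_scale (c : I -> C) (l : list I) (i j : I) :
  group_sum c l j =
  Cplus (if same_scale j i then group_sum c l i else RtoC 0)
        (group_sum c (drop_scale i l) j).
Proof.
  unfold group_sum, drop_scale.
  rewrite (lsum_split (same_scale i)), lsum_filter. f_equal.
  - assert (Htrans : forall k, same_scale i k = true -> same_scale j k = same_scale j i).
    { intros k Hik. apply same_scaleP in Hik as [Hek Hmk].
      unfold same_scale. rewrite Hek, Hmk. reflexivity. }
    destruct (same_scale j i) eqn:Hji.
    + apply lsum_ext. intros k _. destruct (same_scale i k) eqn:Hik; [|reflexivity].
      now rewrite (Htrans k Hik).
    + etransitivity; [|apply (lsum_zero l)]. apply lsum_ext. intros k _.
      destruct (same_scale i k) eqn:Hik; [|reflexivity].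
      now rewrite (Htrans k Hik).
  - apply lsum_ext. intros k _. destruct (same_scale i k); reflexivity.
Qed.

(* The scale of j is O(scale of i). *)
Definition dominates (i j : I) : Prop :=
  e i < e j \/ (e i = e j /\ (m j <= m i)%nat).

Lemma dominates_refl (i : I) : dominates i i.
Proof. right. auto. Qed.

Lemma dominates_trans (i j k : I) : dominates i j -> dominates j k -> dominates i k.
Proof.
  unfold dominates.
  intros [? | [? ?]] [? | [? ?]]; (left; lra) || (right; split; [lra | lia]).
Qed.

Lemma dominates_total (i j : I) : dominates i j \/ dominates j i.
Proof.
  unfold dominates. destruct (Rtotal_order (e i) (e j)) as [? | [? | ?]]; [| |lra].
  - left; left; auto.
  - destruct (Nat.le_ge_cases (m i) (m j)); [right | left]; right; split; auto.
Qed.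

Lemma exists_dominant (x : I) (l : list I) :
  exists i, In i (x :: l) /\ forall j, In j (x :: l) -> dominates i j.
Proof.
  induction l as [|y t [i [Hi Hdom]]].
  - exists x. split; [simpl; auto|]. intros j [<- | []]. apply dominates_refl.
  - destruct (dominates_total i y) as [Hiy | Hyi].
    + exists i. split; [simpl in *; tauto|].
      intros j [<- | [<- | Hj]]; auto; apply Hdom; simpl; auto.
    + exists y. split; [simpl; auto|].
      intros j [<- | [<- | Hj]]; [| apply dominates_refl |];
        apply dominates_trans with i; auto; apply Hdom; simpl; auto.
Qed.

Lemma dominant_group_sum_eq_0 (p : R) (c : I -> C) (l : list I) (i0 : I) :
  (forall j, In j l -> dominates i0 j) -> e i0 < p ->
  bigO_Rpower_neg p (scaled_sum c l) -> group_sum c l i0 = RtoC 0.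
Proof.
  intros Hdom Hp [M [N HO]].
  set (s0 := scale (e i0) (m i0)).
  set (G := group_sum c l i0).
  set (rest n := lsum (fun i => Cmult (c i) (RtoC (scale (e i) (m i) n / s0 n)))
                      (drop_scale i0 l)).
  assert (Hrest : is_lim_seq (fun n => Cmod (rest n)) 0).
  { apply is_lim_seq_Cmod_lsum. intros i Hi.
    apply filter_In in Hi as [Hi Hnot]. apply Bool.negb_true_iff in Hnot.
    assert (Hne : ~ (e i0 = e i /\ m i0 = m i)) by (rewrite <- same_scaleP; congruence).
    assert (Hlt : e i0 < e i \/ (e i0 = e i /\ (m i < m i0)%nat)).
    { destruct (Hdom i Hi) as [? | [He Hm]]; [left; auto|]. right. split; [auto|].
      destruct (Nat.eq_dec (m i) (m i0)); [exfalso; apply Hne; auto | lia]. }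
    apply is_lim_seq_ext with (fun n => Cmod (c i) * Rabs (scale (e i) (m i) n / s0 n)).
    { intros n. rewrite Cmod_mult, Cmod_R. reflexivity. }
    replace (Finite 0) with (Rbar_mult (Cmod (c i)) (Rbar_abs 0))
      by (simpl; f_equal; rewrite Rabs_R0; ring).
    apply is_lim_seq_scal_l, is_lim_seq_abs, is_lim_seq_scale_ratio. auto. }
  assert (HOratio : is_lim_seq (fun n => Rabs M * (scale p 0 n / s0 n)) 0).
  { replace (Finite 0) with (Rbar_mult (Rabs M) 0) by (simpl; f_equal; ring).
    apply is_lim_seq_scal_l, is_lim_seq_scale_ratio. auto. }
  apply Cmod_eq_0, Rle_antisym; [|apply Cmod_ge_0].
  apply (is_lim_seq_le_loc (fun _ => Cmod G)
           (fun n => Rabs M * (scale p 0 n / s0 n) + Cmod (rest n)) (Cmod G) 0).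
  - assert (HN : eventually (fun n : nat => (N <= n)%nat)) by (exists N; auto).
    generalize (filter_and _ _ HN eventually_ln_INR_gt_1). apply filter_imp.
    intros n [Hn HL].
    assert (Hs0 : 0 < s0 n)
      by (apply Rdiv_lt_0_compat; [apply pow_lt; lra | apply Rpower_pos]).
    assert (Hrest_eq : rest n = Cmult (scaled_sum c (drop_scale i0 l) n) (RtoC (/ s0 n))).
    { unfold rest, scaled_sum. rewrite lsum_mult_r. apply lsum_ext. intros i _.
      unfold Rdiv. rewrite RtoC_mult. ring. }
    assert (HG : G = Cminus (Cmult (scaled_sum c l n) (RtoC (/ s0 n))) (rest n)).
    { rewrite Hrest_eq, (scaled_sum_drop_scale c l i0 n).
      transitivity (Cmult G (RtoC (s0 n * / s0 n))).
      - rewrite Rinv_r by lra. ring.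
      - rewrite RtoC_mult. unfold G, s0. ring. }
    rewrite HG.
    unfold Cminus. eapply Rle_trans; [apply Cmod_triangle|]. rewrite Cmod_opp.
    apply Rplus_le_compat_r. rewrite Cmod_mult, Cmod_R, Rabs_pos_eq
      by (left; apply Rinv_0_lt_compat; lra).
    apply Rle_trans with (M * Rpower (INR n) (- p) * / s0 n).
    { apply Rmult_le_compat_r; [left; apply Rinv_0_lt_compat; lra | apply HO; auto]. }
    unfold scale at 1. rewrite pow_O, Rpower_Ropp. unfold Rdiv.
    rewrite Rmult_1_l, <- Rmult_assoc.
    apply Rmult_le_compat_r; [left; apply Rinv_0_lt_compat; lra|].
    apply Rmult_le_compat_r; [left; apply Rinv_0_lt_compat, Rpower_pos | apply Rle_abs].
  - apply is_lim_seq_const.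
  - rewrite <- (Rplus_0_r 0). apply is_lim_seq_plus'; auto.
Qed.

Theorem bigO_group_sum_eq_0 (p : R) (c : I -> C) (l : list I) :
  bigO_Rpower_neg p (scaled_sum c l) ->
  forall j, e j < p -> group_sum c l j = RtoC 0.
Proof.
  intros HO j Hj. remember (length l) as len eqn:Hlen. revert l Hlen HO.
  induction len as [len IH] using Wf_nat.lt_wf_ind. intros l Hlen HO.
  destruct l as [|x t]; [reflexivity|].
  destruct (exists_dominant x t) as [i0 [Hi0 Hdom]].
  destruct (Rlt_or_le (e i0) p) as [Hlt | Hge].
  - assert (HG0 : group_sum c (x :: t) i0 = RtoC 0)
      by (apply dominant_group_sum_eq_0 with p; auto).
    assert (HO' : bigO_Rpower_neg p (scaled_sum c (drop_scale i0 (x :: t)))).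
    { apply (bigO_Rpower_neg_ext p (scaled_sum c (x :: t))); [|exact HO].
      intros n. rewrite scaled_sum_drop_scale with (j := i0), HG0, Cmult_0_l.
      apply Cplus_0_l. }
    assert (Hshort : (length (drop_scale i0 (x :: t)) < len)%nat)
      by (subst; apply length_drop_scale; auto).
    rewrite (group_sum_drop_scale c _ i0 j), HG0, (IH _ Hshort _ eq_refl HO'), Cplus_0_r.
    destruct (same_scale j i0); reflexivity.
  - etransitivity; [|apply (lsum_zero (x :: t))]. apply lsum_ext. intros i Hi.
    replace (same_scale j i) with false; [reflexivity|].
    symmetry. apply Bool.not_true_iff_false. rewrite same_scaleP.
    destruct (Hdom i Hi) as [? | [? _]]; lra.
Qed.

End Scales.

Lemma lsum_seq (f : nat -> C) (N : nat) : lsum f (seq 0 (S N)) = sum_n f N.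
Proof.
  induction N as [|N IH].
  - rewrite sum_O. apply Cplus_0_r.
  - rewrite seq_S, lsum_app, IH, sum_Sn. simpl. rewrite Cplus_0_r. reflexivity.
Qed.

Lemma sum_n_zero {G : AbelianMonoid} (F : nat -> G) (N : nat) :
  (forall i, (i <= N)%nat -> F i = zero) -> sum_n F N = zero.
Proof. intros HF. rewrite (sum_n_ext_loc _ _ _ HF). apply sum_n_m_const_zero. Qed.

Lemma sum_n_single {G : AbelianMonoid} (F : nat -> G) (k N : nat) :
  (k <= N)%nat -> (forall i, i <> k -> F i = zero) -> sum_n F N = F k.
Proof.
  intros Hk HF. induction N as [|N IH].
  - rewrite sum_O. f_equal. lia.
  - rewrite sum_Sn. destruct (Nat.eq_dec k (S N)) as [-> | Hne].
    + rewrite sum_n_zero by (intros; apply HF; lia). apply plus_zero_l.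
    + rewrite IH, (HF (S N)) by lia. apply plus_zero_r.
Qed.

Definition triples (B : nat) : list (nat * nat * nat) :=
  flat_map (fun k => flat_map (fun l => map (fun m => (k, l, m)) (seq 0 (S l)))
                              (seq 0 (S B)))
           (seq 0 (S B)).

Lemma lsum_triples (f : nat * nat * nat -> C) (B : nat) :
  lsum f (triples B) = sum_n (fun k => sum_n (fun l => sum_n (fun m => f (k, l, m)) l) B) B.
Proof.
  unfold triples. rewrite lsum_flat_map, lsum_seq. apply sum_n_ext. intros k.
  rewrite lsum_flat_map, lsum_seq. apply sum_n_ext. intros l.
  rewrite lsum_map, lsum_seq. reflexivity.
Qed.

Lemma lsum_triples_single (f : nat * nat * nat -> C) (B k l m : nat) :
  (k <= B)%nat -> (l <= B)%nat -> (m <= l)%nat ->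
  (forall t, t <> (k, l, m) -> f t = RtoC 0) -> lsum f (triples B) = f (k, l, m).
Proof.
  intros Hk Hl Hm Hf. rewrite lsum_triples.
  rewrite (sum_n_single _ k), (sum_n_single _ l), (sum_n_single _ m); auto.
  - intros m' Hm'. apply Hf. congruence.
  - intros l' Hl'. apply sum_n_zero. intros m' _. apply Hf. congruence.
  - intros k' Hk'. apply sum_n_zero. intros l' _. apply sum_n_zero. intros m' _.
    apply Hf. congruence.
Qed.

Lemma irrational_affine_inj (rho : R) (k l k' l' : nat) : irrational rho ->
  INR k * rho + INR l = INR k' * rho + INR l' -> k = k' /\ l = l'.
Proof.
  intros Hirr H.
  destruct (Nat.eq_dec k k') as [-> | Hne]; [split; [reflexivity | apply INR_eq; lra]|].
  exfalso.
  assert (Hd : INR k - INR k' <> 0) by (intros H0; apply Hne, INR_eq; lra).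
  apply (Hirr (inject_Z (Z.of_nat l' - Z.of_nat l) / inject_Z (Z.of_nat k - Z.of_nat k'))%Q).
  rewrite Q2R_div.
  - unfold Q2R, inject_Z. simpl. rewrite !minus_IZR, <- !INR_IZR_INZ.
    apply Rmult_eq_reg_r with (INR k - INR k'); [|exact Hd].
    field_simplify; [lra | exact Hd].
  - intros H0. apply Hne. apply (proj1 (inject_Z_injective _ 0%Z)) in H0. lia.
Qed.

Lemma admissible_le_bound (rho p : R) (k l m : nat) : 0 < rho ->
  admissible rho p k l m -> (k <= Defs.bound rho p)%nat /\ (l <= Defs.bound rho p)%nat.
Proof.
  intros Hrho [_ [_ Hlt]]. unfold Defs.bound.
  pose proof (pos_INR k). pose proof (pos_INR l).
  destruct (archimed (p / rho)) as [Hup1 _]. destruct (archimed p) as [Hup2 _].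
  assert (Hk : INR k < p / rho).
  { apply Rmult_lt_reg_r with rho; [exact Hrho|].
    unfold Rdiv. rewrite Rmult_assoc, Rinv_l; nra. }
  assert (Hl : INR l < p) by nra.
  assert (Zk : (Z.of_nat k < up (p / rho))%Z) by (apply lt_IZR; rewrite <- INR_IZR_INZ; lra).
  assert (Zl : (Z.of_nat l < up p)%Z) by (apply lt_IZR; rewrite <- INR_IZR_INZ; lra).
  split; lia.
Qed.

Definition triple_exponent (rho : R) (t : nat * nat * nat) : R :=
  let '(k, l, _) := t in INR k * rho + INR l + 1.

Definition triple_log_power (t : nat * nat * nat) : nat :=
  let '(_, _, m) := t in m.

Definition admissible_coef (rho p : R) (a : nat -> nat -> nat -> C)
  (t : nat * nat * nat) : C :=
  let '(k, l, m) := t in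
  if (Nat.leb 1 k && Nat.leb m l)%bool then
    if Rlt_dec (INR k * rho + INR l + 1) p then a k l m else RtoC 0
  else RtoC 0.

Lemma adm_sum_eq_scaled_sum (rho p : R) (a : nat -> nat -> nat -> C) (n : nat) :
  adm_sum rho p a n =
  scaled_sum (triple_exponent rho) triple_log_power (admissible_coef rho p a)
             (triples (Defs.bound rho p)) n.
Proof.
  unfold scaled_sum. rewrite lsum_triples. unfold adm_sum.
  apply sum_n_ext. intros k. apply sum_n_ext. intros l. apply sum_n_ext. intros m.
  cbn [admissible_coef triple_exponent triple_log_power].
  destruct (Nat.leb 1 k && Nat.leb m l)%bool; [destruct (Rlt_dec _ p)|];
    first [reflexivity | symmetry; apply Cmult_0_l].
Qed.

Lemma group_sum_admissible (rho p : R) (a : nat -> nat -> nat -> C) (k l m : nat) :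
  0 < rho -> irrational rho -> admissible rho p k l m ->
  group_sum (triple_exponent rho) triple_log_power (admissible_coef rho p a)
            (triples (Defs.bound rho p)) (k, l, m) = a k l m.
Proof.
  intros Hrho Hirr Hadm.
  destruct (admissible_le_bound rho p k l m Hrho Hadm) as [Hk Hl].
  destruct Hadm as [H1k [Hml Hlt]].
  unfold group_sum. rewrite (lsum_triples_single _ _ k l m); auto.
  - rewrite (proj2 (same_scaleP _ _ _ _)) by auto. cbn [admissible_coef].
    rewrite (proj2 (Nat.leb_le 1 k) H1k), (proj2 (Nat.leb_le m l) Hml). simpl.
    destruct (Rlt_dec _ p); [reflexivity | contradiction].
  - intros [[k' l'] m'] Hne.
    destruct (same_scale _ _ _ _) eqn:Hs; [|reflexivity].
    apply same_scaleP in Hs as [He Hm]. simpl in He, Hm.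
    destruct (irrational_affine_inj rho k l k' l' Hirr) as [-> ->]; [lra|]. congruence.
Qed.

Theorem lemma4p4 (rho p : R) (a : nat -> nat -> nat -> C)
  (Hrho : 0 < rho) (Hirr : irrational rho) (Hp : 0 < p)
  (HO : exists (M : R) (N : nat), forall n : nat, (N <= n)%nat ->
          Cmod (adm_sum rho p a n) <= M * Rpower (INR n) (- p)) :
  forall k l m : nat, admissible rho p k l m -> a k l m = RtoC 0.
Proof.
  intros k l m Hadm.
  rewrite <- (group_sum_admissible rho p a k l m Hrho Hirr Hadm).
  apply (bigO_group_sum_eq_0 (triple_exponent rho) triple_log_power p).
  - apply (bigO_Rpower_neg_ext p (adm_sum rho p a)); [apply adm_sum_eq_scaled_sum | exact HO].
  - destruct Hadm as [_ [_ Hlt]]. exact Hlt.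
Qed.
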